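(* Let $f\in K[x]$, $Q<R$ in $\mathcal Q$ and $d=\deg_Qf$. Then $\nu(f_{Q,d}-f_{R,d})>\nu(f_{Q,d})$ (in particular $\nu(f_{Q,d})=\nu(f_{R,d})$), $d=\max\{j:\nu_Q(f_{R,j}R^j)=\nu_Q(f)\}$, and $\deg_Rf\le d$.
   Context: Let $(K,v)$ be a valued field, $\Gamma$ the divisible hull of $vK$, embedded in a divisible ordered abelian group $\Lambda$. Let $\nu\colon K[x]\to\Lambda\cup\{\infty\}$ be a valuation extending $v$ which is well-specified, i.e. it is not the case that simultaneously $\nu^{-1}(\infty)=0$, the value group of $\nu$ modulo $\Gamma$ is torsion, and the residue field of $\nu$ is algebraic over that of $v$. For $s\ge0$ let $\partial_s$ be the $s$-th Hasse–Schmidt derivative, defined by $f(x+y)=\sum_{s\ge0}(\partial_sf)y^s$. For nonconstant $f$ with $\nu(f)<\infty$ the level is $\epsilon_\nu(f)=\max\{(\nu(f)-\nu(\partial_sf))/s: s\ge1\}$; $\epsilon_\nu(a)=-\infty$ for $a\in K$. A monic $Q\in K[x]$ is a key polynomial for $\nu$ if $\epsilon_\nu(f)<\epsilon_\nu(Q)$ whenever $\deg f<\deg Q$. For monic $Q$, each $f$ has a unique $Q$-expansion $f=\sum_{i\ge0}f_{Q,i}Q^i$ with $\deg f_{Q,i}<\deg Q$; set $\nu_Q(f)=\min_i\nu(f_{Q,i}Q^i)$ (a valuation with $\nu_Q\le\nu$ for key polynomials $Q$), $S_Q(f)=\{i:\nu(f_{Q,i}Q^i)=\nu_Q(f)\}$,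 $\deg_Qf=\max S_Q(f)$. Fix $m\ge1$ such that the set $\Psi_m$ of key polynomials of degree $m$ for $\nu$ is nonempty and has no element of maximal $\nu$-value. Let $\mathcal Q\subseteq\Psi_m$ be well-ordered by $Q<R\iff\nu(Q)<\nu(R)$ and cofinal in $\Psi_m$ for $\nu$-values. As in the paper, all values $\nu_Q(f)$ ($f\ne0$) lie in $\Gamma$. *)

From HB Require Import structures.
From mathcomp Require Import all_boot all_order all_algebra.
Set Implicit Arguments. Unset Strict Implicit. Unset Printing Implicit Defensive.
Import Order.TTheory GRing.Theory Num.Theory.
Local Open Scope ring_scope.

Record divisible_oag (L : porderZmodType) : Prop := {
  doag_total : forall x y : L, (x <= y) || (y <= x);
  doag_addr  : forall x y z : L, x <= y -> x + z <= y + z;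
  doag_div   : forall (x : L) (n : nat), (0 < n)%N -> exists y : L, y *+ n = x
}.

(* Lambda \cup {oo} : None stands for oo. *)
Definition vinf (L : porderZmodType) := option L.

Section Vinf.
Variable L : porderZmodType.

Definition vle (a b : vinf L) : bool :=
  match a, b with
  | _, None => true
  | None, Some _ => false
  | Some x, Some y => x <= y
  end.

Definition vlt (a b : vinf L) : bool :=
  match a, b with
  | Some x, Some y => x < y
  | Some _, None => true
  | None, _ => false
  end.

Definition vadd (a b : vinf L) : vinf L :=
  match a, b with
  | Some x, Some y => Some (x + y)
  | _, _ => None
  end.

Definition vmin (a b : vinf L) : vinf L := if vle a b then a else b.
End Vinf.

Section Valuations.
Variables (K : fieldType) (L : porderZmodType).

Definition is_field_valuation (v : K -> vinf L) : Prop :=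
  [/\ forall a, v a = None <-> a = 0,
      v 1 = Some 0,
      forall a b, v (a * b) = vadd (v a) (v b)
    & forall a b, vle (vmin (v a) (v b)) (v (a + b))].

(* a valuation on the ring K[x] (its support nu^-1(oo) may be a nonzero prime) *)
Definition is_poly_valuation (nu : {poly K} -> vinf L) : Prop :=
  [/\ nu 0 = None,
      nu 1 = Some 0,
      forall f g, nu (f * g) = vadd (nu f) (nu g)
    & forall f g, vle (vmin (nu f) (nu g)) (nu (f + g))].

Definition extends (nu : {poly K} -> vinf L) (v : K -> vinf L) : Prop :=
  forall a, nu a%:P = v a.

(* Gamma = divisible hull of vK inside Lambda *)
Definition in_Gamma (v : K -> vinf L) (g : L) : Prop :=
  exists n : nat, (0 < n)%N /\ exists a : K, a != 0 /\ v a = Some (g *+ n).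

Definition in_value_group (nu : {poly K} -> vinf L) (g : L) : Prop :=
  exists f h (x y : L), nu f = Some x /\ nu h = Some y /\ g = x - y.

Definition trivial_support (nu : {poly K} -> vinf L) : Prop :=
  forall f, nu f = None -> f = 0.

Definition value_group_torsion_mod_Gamma nu v : Prop :=
  forall g, in_value_group nu g -> exists n : nat, (0 < n)%N /\ in_Gamma v (g *+ n).

(* The residue field of nu is that of the valuation induced on the fraction
   field of K[x]/supp(nu); its elements are the classes of f/g with
   nu g < oo and nu f >= nu g.  Such a class is algebraic over the residue
   field of v iff it is a root of a monic polynomial whose coefficients are
   residues of elements c_i of the valuation ring of v, i.e.
   nu(f^n + sum_{i<n} c_i f^i g^(n-i)) > n * nu(g). *)
Definition residue_field_algebraic nu (v : K -> vinf L) : Prop :=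
  forall f g (y : L), nu g = Some y -> vle (Some y) (nu f) ->
  exists n : nat, (0 < n)%N /\ exists c : nat -> K,
    (forall i, vle (Some 0) (v (c i))) /\
    vlt (Some (y *+ n))
        (nu (f ^+ n + \sum_(i < n) (c i)%:P * f ^+ i * g ^+ (n - i))).

Definition well_specified nu v : Prop :=
  ~ [/\ trivial_support nu, value_group_torsion_mod_Gamma nu v
      & residue_field_algebraic nu v].

(* Hasse--Schmidt derivative: mathcomp's p^`N(s) (= nderivn s p),
   which satisfies f(x+y) = sum_s (f^`N(s))(x) y^s. *)
Definition hasse (s : nat) (f : {poly K}) : {poly K} := f^`N(s).

Definition constant_poly (f : {poly K}) : bool := (size f <= 1)%N.

(* eps_nu(f) < eps_nu(g), where eps_nu(a) = -oo for constants and, for a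
   nonconstant f with nu f < oo,
     eps_nu(f) = max_{s>=1} (nu f - nu (d_s f)) / s
   (terms with nu(d_s f) = oo contribute -oo).  Since Lambda is a torsion-free
   ordered group, a/s < b/t iff t*a < s*b; the max over s is attained, so
   eps(f) < eps(g) iff some t realizing eps(g) beats every s-term of f. *)
Definition level_lt (nu : {poly K} -> vinf L) (f g : {poly K}) : Prop :=
  (constant_poly f /\ ~~ constant_poly g /\ exists y, nu g = Some y)
  \/
  (~~ constant_poly f /\ ~~ constant_poly g /\
   exists x y, nu f = Some x /\ nu g = Some y /\
   exists t : nat, (1 <= t)%N /\ exists b : L, nu (hasse t g) = Some b /\
     forall s : nat, (1 <= s)%N -> forall a : L, nu (hasse s f) = Some a ->
       (x - a) *+ t < (y - b) *+ s).

Definition key_poly nu (Q : {poly K}) : Prop :=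
  Q \is monic /\ forall f : {poly K}, (size f < size Q)%N -> level_lt nu f Q.

Definition Psi nu (m : nat) (Q : {poly K}) : Prop :=
  key_poly nu Q /\ size Q = m.+1.

(* Q-expansion coefficients: f = sum_i f_{Q,i} Q^i with deg f_{Q,i} < deg Q *)
Definition qcoef (Q f : {poly K}) (i : nat) : {poly K} :=
  (iter i (fun g => g %/ Q) f) %% Q.

(* nu_Q(f) = min_i nu(f_{Q,i} Q^i); all terms with i >= size f vanish *)
Definition nuQ nu (Q f : {poly K}) : vinf L :=
  \big[@vmin L/None]_(i < size f) nu (qcoef Q f i * Q ^+ i).

Definition degQ nu (Q f : {poly K}) : nat :=
  \big[maxn/0%N]_(i < size f | nu (qcoef Q f i * Q ^+ i) == nuQ nu Q f) (i : nat).

End Valuations.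

From HB Require Import structures.
From mathcomp Require Import all_boot all_order all_algebra.
From mathcomp Require Import ring zify.
Set Implicit Arguments. Unset Strict Implicit. Unset Printing Implicit Defensive.
Import Order.TTheory GRing.Theory Num.Theory.
Local Open Scope ring_scope.

(* Put h = R - Q: it has degree < deg Q and nu h = nu Q = y.  Because Q is a
   key polynomial, for a, c of degree < deg Q the Q-expansion a c = q Q + r
   satisfies nu r = nu (a c) < nu (q Q); this is proved by comparing levels,
   i.e. slopes of Hasse derivatives.  Consequently multiplying by R = Q + h
   raises every term of a Q-expansion by y and shifts its last term of minimal
   value by one index, so the Q-expansion of g R^j (deg g < deg Q) is, up to
   terms of larger value, led by g Q^j.  Summing over the R-expansion
   f = sum_j g_j R^j, the Q-expansion of f is led by g_J Q^J where J is the
   last index minimizing nu (g_j Q^j); this gives nu_Q f, deg_Q f = J and the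
   closeness of f_{Q,J} to f_{R,J}.  Finally nu R > nu Q makes every g_i R^i
   with i > J strictly larger than g_J R^J, whence deg_R f <= J. *)

Record ordered_group (L : porderZmodType) : Prop := {
  og_total : forall x y : L, (x <= y) || (y <= x);
  og_addr : forall x y z : L, x <= y -> x + z <= y + z
}.

Lemma divisible_oag_ordered (L : porderZmodType) :
  divisible_oag L -> ordered_group L.
Proof. by case=> htot hadd _; split. Qed.

Section OrderedGroup.
Variables (L : porderZmodType) (hL : ordered_group L).
Implicit Types x y z : L.

Lemma og_lerD2r x y z : (x + z <= y + z) = (x <= y).
Proof.
apply/idP/idP => h; last exact: og_addr.
by have := og_addr hL (- z) h; rewrite !addrK.
Qed.

Lemma og_lerD2l x y z : (z + x <= z + y) = (x <= y).
Proof. by rewrite ![z + _]addrC og_lerD2r. Qed.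

Lemma og_ltrD2r x y z : (x + z < y + z) = (x < y).
Proof. by rewrite !lt_neqAle og_lerD2r (inj_eq (addIr z)). Qed.

Lemma og_ltrD2l x y z : (z + x < z + y) = (x < y).
Proof. by rewrite ![z + _]addrC og_ltrD2r. Qed.

Lemma og_lerD x y x' y' : x <= y -> x' <= y' -> x + x' <= y + y'.
Proof.
by move=> hx hx'; apply: (@le_trans _ _ (y + x')); rewrite ?og_lerD2r ?og_lerD2l.
Qed.

Lemma og_ltr_leD x y x' y' : x < y -> x' <= y' -> x + x' < y + y'.
Proof.
by move=> hx hx'; apply: (@lt_le_trans _ _ (y + x')); rewrite ?og_ltrD2r ?og_lerD2l.
Qed.

Lemma og_ler_ltD x y x' y' : x <= y -> x' < y' -> x + x' < y + y'.
Proof. by move=> hx hx'; rewrite addrC [y + _]addrC og_ltr_leD. Qed.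

Lemma og_ltNge x y : (x < y) = ~~ (y <= x).
Proof.
have [yx | xy] := boolP (y <= x).
  by apply/negbTE/negP => /lt_le_trans/(_ yx); rewrite ltxx.
have := og_total hL x y; rewrite (negbTE xy) orbF lt_neqAle => ->.
by rewrite andbT; apply: contraNneq xy => ->.
Qed.

Lemma og_leNgt x y : (x <= y) = ~~ (y < x).
Proof. by rewrite og_ltNge negbK. Qed.

Lemma og_lerN2 x y : (- x <= - y) = (y <= x).
Proof. by rewrite -(og_lerD2r (- x) (- y) (x + y)) addKr [x + y]addrC addKr. Qed.

Lemma og_lerMn2r n x y : x <= y -> x *+ n <= y *+ n.
Proof. by move=> h; elim: n => [|n IH]; rewrite ?mulr0n // !mulrS og_lerD. Qed.

Lemma og_ltrMn2r n x y : (0 < n)%N -> x < y -> x *+ n < y *+ n.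
Proof.
case: n => // n _ h; elim: n => [|n IH]; first by rewrite !mulr1n.
by rewrite mulrS [y *+ _]mulrS og_ltr_leD // ltW.
Qed.

Lemma og_ltr_pMn2r n x y : (0 < n)%N -> (x *+ n < y *+ n) = (x < y).
Proof.
move=> n0; apply/idP/idP; last exact: og_ltrMn2r.
by rewrite !og_ltNge; apply: contra; apply: og_lerMn2r.
Qed.

Lemma og_ler_pMn2r n x y : (0 < n)%N -> (x *+ n <= y *+ n) = (x <= y).
Proof. by move=> n0; rewrite !og_leNgt og_ltr_pMn2r. Qed.

Lemma og_double_eq0 x : x + x = 0 -> x = 0.
Proof.
move=> h; apply/eqP; rewrite eq_le; have [x0|x0] := orP (og_total hL x 0).
  by rewrite x0 -(og_lerD2l 0 x x) h addr0.
by rewrite x0 andbT -(og_lerD2l x 0 x) h addr0.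
Qed.

Lemma og_addMn_lt x x' y z j i : y < z -> (j < i)%N ->
  x + y *+ j <= x' + y *+ i -> x + z *+ j < x' + z *+ i.
Proof.
move=> yz ji; rewrite -(subnKC (ltnW ji)) !mulrnDr ![x' + (_ + _)]addrCA.
rewrite ![x + _]addrC og_lerD2l og_ltrD2l => le_x; apply: le_lt_trans le_x _.
by rewrite og_ltrD2l og_ltrMn2r // subn_gt0.
Qed.

Lemma ex_last_argmin (P : pred nat) (lam : nat -> L) n :
  (exists2 j, (j < n)%N & P j) ->
  exists J, [/\ (J < n)%N, P J & forall j, (j < n)%N -> P j ->
                 lam J <= lam j /\ ((J < j)%N -> lam J < lam j)].
Proof.
elim: n => [[] // | n IH [j jn Pj]].
have [/hasP [j' j'n Pj'] | /hasPn noP] := boolP (has P (iota 0 n)).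
  rewrite mem_iota in j'n.
  have [J [Jn PJ minJ]] := IH (ex_intro2 _ _ j' j'n Pj').
  have [Pn | nPn] := boolP (P n); last first.
    exists J; split=> [|//|i]; first by rewrite ltnS ltnW.
    by rewrite ltnS leq_eqVlt => /orP [/eqP -> | /minJ //]; rewrite (negbTE nPn).
  have [le_n | lt_J] := boolP (lam n <= lam J).
    exists n; split=> // i; rewrite ltnS leq_eqVlt => /orP [/eqP -> | ilt Pi].
      by rewrite lexx ltnn.
    by rewrite ltnNge (ltnW ilt); split=> //; apply: le_trans le_n (minJ _ ilt Pi).1.
  rewrite -og_ltNge in lt_J; exists J; split=> [|//|i]; first by rewrite ltnS ltnW.
  by rewrite ltnS leq_eqVlt => /orP [/eqP -> _ | /minJ //]; rewrite (ltW lt_J).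
have Pn : P n.
  move: jn Pj; rewrite ltnS leq_eqVlt => /orP [/eqP -> // | jn]; apply: contraLR => _.
  by apply: noP; rewrite mem_iota.
exists n; split=> // i; rewrite ltnS leq_eqVlt => /orP [/eqP -> | ilt Pi].
  by rewrite lexx ltnn.
by have := noP i; rewrite mem_iota ilt Pi => /(_ isT).
Qed.

End OrderedGroup.

Section Vinf.
Variables (L : porderZmodType) (hL : ordered_group L).
Implicit Types a b c : vinf L.

Lemma vle_refl a : vle a a.
Proof. by case: a => //= x. Qed.

Lemma vle_trans a b c : vle a b -> vle b c -> vle a c.
Proof. by case: a => [x|]; case: b => [y|]; case: c => [z|] //; apply: le_trans. Qed.

Lemma vlt_vle a b : vlt a b -> vle a b.
Proof. by case: a => [x|]; case: b => [y|] //= /ltW. Qed.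

Lemma vlt_le_trans a b c : vlt a b -> vle b c -> vlt a c.
Proof. by case: a => [x|]; case: b => [y|]; case: c => [z|] //; apply: lt_le_trans. Qed.

Lemma vle_lt_trans a b c : vle a b -> vlt b c -> vlt a c.
Proof. by case: a => [x|]; case: b => [y|]; case: c => [z|] //; apply: le_lt_trans. Qed.

Lemma vlt_irr a : vlt a a = false.
Proof. by case: a => //= x; rewrite ltxx. Qed.

Lemma vltNge a b : vlt a b = ~~ vle b a.
Proof. by case: a => [x|]; case: b => [y|] //=; apply: og_ltNge. Qed.

Lemma vle_anti a b : vle a b -> vle b a -> a = b.
Proof.
by case: a => [x|]; case: b => [y|] //= h1 h2; congr Some; apply/eqP; rewrite eq_le h1.
Qed.

Lemma vmin_le_l a b : vle (vmin a b) a.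
Proof.
by rewrite /vmin; case: ifP => [_|/negbT]; rewrite ?vle_refl // -vltNge => /vlt_vle.
Qed.

Lemma vmin_le_r a b : vle (vmin a b) b.
Proof. by rewrite /vmin; case: ifP => // _; apply: vle_refl. Qed.

Lemma vle_vmin a b c : vle c a -> vle c b -> vle c (vmin a b).
Proof. by rewrite /vmin; case: ifP. Qed.

Lemma vlt_vmin a b c : vlt c a -> vlt c b -> vlt c (vmin a b).
Proof. by rewrite /vmin; case: ifP. Qed.

Lemma vle_addr a b (u : L) : vle (vadd a (Some u)) (vadd b (Some u)) = vle a b.
Proof. by case: a => [x|]; case: b => [z|] //=; rewrite og_lerD2r. Qed.

Lemma vlt_addr a b (u : L) : vlt (vadd a (Some u)) (vadd b (Some u)) = vlt a b.
Proof. by case: a => [x|]; case: b => [z|] //=; rewrite og_ltrD2r. Qed.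

Lemma vadd_injr (u : L) : injective (fun a : vinf L => vadd a (Some u)).
Proof. by case=> [x|] [z|] //= [] /addIr ->. Qed.

Lemma vle_bigmin I (r : seq I) (F : I -> vinf L) c :
  (forall i, vle c (F i)) -> vle c (\big[@vmin L/None]_(i <- r) F i).
Proof.
by move=> h; elim/big_rec: _ => [|i a _]; [case: c {h} | apply: vle_vmin].
Qed.

Lemma bigmin_le (I : eqType) (r : seq I) (F : I -> vinf L) i :
  i \in r -> vle (\big[@vmin L/None]_(j <- r) F j) (F i).
Proof.
elim: r => [|j r IH] //; rewrite inE big_cons => /orP [/eqP -> | ir].
  exact: vmin_le_l.
exact: vle_trans (vmin_le_r _ _) (IH ir).
Qed.

End Vinf.

Section PolyValuation.
Variables (K : fieldType) (L : porderZmodType) (hL : ordered_group L).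
Variables (nu : {poly K} -> vinf L) (hnu : is_poly_valuation nu).
Implicit Types f g : {poly K}.

Lemma nu0 : nu 0 = None. Proof. by case: hnu. Qed.
Lemma nu1 : nu 1 = Some 0. Proof. by case: hnu. Qed.
Lemma nuM f g : nu (f * g) = vadd (nu f) (nu g). Proof. by case: hnu. Qed.
Lemma nuD f g : vle (vmin (nu f) (nu g)) (nu (f + g)). Proof. by case: hnu. Qed.

Lemma nuN f : nu (- f) = nu f.
Proof.
have nuN1 : nu (-1) = Some 0.
  have := nuM (-1) (-1); rewrite mulrNN mulr1 nu1.
  by case: (nu (-1)) => //= x [] /esym/(og_double_eq0 hL) ->.
by rewrite -mulN1r nuM nuN1; case: (nu f) => //= x; rewrite add0r.
Qed.

Lemma nuX f n y : nu f = Some y -> nu (f ^+ n) = Some (y *+ n).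
Proof.
move=> hf; elim: n => [|n IH]; first by rewrite expr0 mulr0n nu1.
by rewrite exprS nuM hf IH mulrS.
Qed.

Lemma vle_nuD c f g : vle c (nu f) -> vle c (nu g) -> vle c (nu (f + g)).
Proof. by move=> hf hg; apply: vle_trans (nuD f g); apply: vle_vmin. Qed.

Lemma vlt_nuD c f g : vlt c (nu f) -> vlt c (nu g) -> vlt c (nu (f + g)).
Proof. by move=> hf hg; apply: vlt_le_trans (nuD f g); apply: vlt_vmin. Qed.

Lemma vle_nuB c f g : vle c (nu f) -> vle c (nu g) -> vle c (nu (f - g)).
Proof. by move=> hf hg; apply: vle_nuD; rewrite ?nuN. Qed.

Lemma vlt_nuB c f g : vlt c (nu f) -> vlt c (nu g) -> vlt c (nu (f - g)).
Proof. by move=> hf hg; apply: vlt_nuD; rewrite ?nuN. Qed.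

Lemma vle_nu_sum c I (r : seq I) (P : pred I) (F : I -> {poly K}) :
  (forall i, P i -> vle c (nu (F i))) -> vle c (nu (\sum_(i <- r | P i) F i)).
Proof.
move=> h; elim/big_rec: _ => [|i f Pi hf]; last by apply: vle_nuD; rewrite ?h.
by rewrite nu0; case: c {h}.
Qed.

Lemma vlt_nu_sum (c : L) I (r : seq I) (P : pred I) (F : I -> {poly K}) :
  (forall i, P i -> vlt (Some c) (nu (F i))) ->
  vlt (Some c) (nu (\sum_(i <- r | P i) F i)).
Proof.
move=> h; elim/big_rec: _ => [|i f Pi hf]; last by apply: vlt_nuD; rewrite ?h.
by rewrite nu0.
Qed.

Lemma nuD_eq f g : vlt (nu f) (nu g) -> nu (f + g) = nu f.
Proof.
move=> lt_fg; apply: vle_anti; last first.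
  by apply: vle_nuD; [apply: vle_refl | apply: vlt_vle].
apply/negPn; rewrite -(vltNge hL); apply/negP => lt_f_fg.
have : vlt (nu f) (nu (f + g - g)) by apply: vlt_nuB.
by rewrite addrK vlt_irr.
Qed.

Lemma nu_const_fin f : f != 0 -> (size f <= 1)%N -> exists x, nu f = Some x.
Proof.
move=> nz /size1_polyC ef.
have c0 : f`_0 != 0 by apply: contraNneq nz => c0; rewrite ef c0.
have := nuM (f`_0)%:P (f`_0)^-1%:P; rewrite -polyCM mulfV // nu1 -ef.
by case: (nu f) => [x|] // _; exists x.
Qed.

End PolyValuation.

Section HasseLeibniz.
Variable K : fieldType.

Lemma nderivnMX (p : {poly K}) n : (p * 'X)^`N(n.+1) = p^`N(n) + p^`N(n.+1) * 'X.
Proof. by rewrite -[p * 'X]addr0 -polyC0 nderivnMXaddC. Qed.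

Lemma nderivnM (p q : {poly K}) s :
  (p * q)^`N(s) = \sum_(i < s.+1) p^`N(i) * q^`N(s - i).
Proof.
elim/poly_ind: p s => [|p c IH] s.
  by rewrite mul0r nderivn_poly0 ?size_poly0 // big1 // => i _;
    rewrite nderivn_poly0 ?size_poly0 // mul0r.
have -> : (p * 'X + c%:P) * q = (p * q) * 'X + c *: q.
  by rewrite mulrDl mul_polyC mulrAC.
case: s => [|s].
  by rewrite big_ord_recl big_ord0 !nderivn0 addr0 mulrDl mul_polyC mulrAC.
rewrite raddfD /= nderivnZ nderivnMX !IH (big_ord_recl s.+1) nderivn0 subn0.
rewrite [RHS](big_ord_recl s.+1) nderivn0 subn0 /=.
under [in RHS]eq_bigr => i _ do rewrite /bump /= add1n nderivnMXaddC mulrDl.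
rewrite big_split /=.
have -> : \sum_(i < s.+1) p^`N(i.+1) * 'X * q^`N(s - i) =
          (\sum_(i < s.+1) p^`N(bump 0 i) * q^`N(s.+1 - bump 0 i)) * 'X.
  rewrite big_distrl /=; apply: eq_bigr => i _.
  by rewrite /bump /= add1n subSS -!mulrA (mulrC 'X).
under [X in _ = _ + (X + _)]eq_bigr => i _ do rewrite subSS.
rewrite -mul_polyC; ring.
Qed.

End HasseLeibniz.

Section QExpansion.
Variables (K : fieldType) (Q : {poly K}).
Hypothesis Q_neq0 : Q != 0.
Implicit Types f g c : {poly K}.

Lemma qcoef0 f : qcoef Q f 0 = f %% Q.
Proof. by []. Qed.

Lemma qcoefS f i : qcoef Q f i.+1 = qcoef Q (f %/ Q) i.
Proof. by rewrite /qcoef iterSr. Qed.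

Lemma qcoef0p i : qcoef Q 0 i = 0.
Proof. by elim: i => [|i IH]; rewrite ?qcoef0 ?qcoefS ?div0p ?mod0p. Qed.

Lemma qcoefD f g i : qcoef Q (f + g) i = qcoef Q f i + qcoef Q g i.
Proof.
elim: i f g => [|i IH] f g; first by rewrite !qcoef0 modpD.
by rewrite !qcoefS divpD IH.
Qed.

Lemma qcoef_sum I (r : seq I) (P : pred I) (F : I -> {poly K}) i :
  qcoef Q (\sum_(j <- r | P j) F j) i = \sum_(j <- r | P j) qcoef Q (F j) i.
Proof. exact: (big_morph (qcoef Q ^~ i) (fun f g => qcoefD f g i) (qcoef0p i)). Qed.

Lemma size_qcoef f i : (size (qcoef Q f i) < size Q)%N.
Proof. by rewrite ltn_modp. Qed.

Lemma qcoef_monomial c j i : (size c < size Q)%N ->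
  qcoef Q (c * Q ^+ j) i = if i == j then c else 0.
Proof.
move=> sc; elim: j i => [|j IH] [|i].
- by rewrite expr0 mulr1 qcoef0 modp_small.
- by rewrite expr0 mulr1 qcoefS divp_small // qcoef0p.
- by rewrite qcoef0 exprSr mulrA modp_mull.
- by rewrite qcoefS exprSr mulrA mulpK // IH eqSS.
Qed.

Lemma qcoef_mulQ f i : qcoef Q (f * Q) i = if i is i'.+1 then qcoef Q f i' else 0.
Proof. by case: i => [|i]; rewrite ?qcoef0 ?modp_mull // qcoefS mulpK. Qed.

Hypothesis Q_nonconst : (1 < size Q)%N.

Lemma qexpansion f : f = \sum_(i < size f) qcoef Q f i * Q ^+ i.
Proof.
suff qexp_N N : (size f <= N)%N -> f = \sum_(i < N) qcoef Q f i * Q ^+ i.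
  exact: qexp_N.
elim: N f => [|N IH] f sf; first by move: sf; rewrite leqn0 size_poly_eq0 big_ord0 => /eqP.
rewrite big_ord_recl qcoef0 expr0 mulr1.
have sfQ : (size (f %/ Q)%R <= N)%N.
  by rewrite size_divp //; move: sf Q_nonconst; move: (size Q) (size f) => a b; lia.
rewrite {1}(divp_eq f Q) (IH _ sfQ) addrC big_distrl /=; congr (_ + _).
by apply: eq_bigr => i _; rewrite qcoefS exprSr mulrA.
Qed.

Lemma qcoef_eq0 f i : (size f <= i)%N -> qcoef Q f i = 0.
Proof.
move=> fi; rewrite (qexpansion f) qcoef_sum big1 // => j _.
rewrite qcoef_monomial ?size_qcoef //; case: eqP => // ij.
by have := ltn_ord j; rewrite -ij ltnNge fi.
Qed.

Lemma qcoef_neq0 f : f != 0 -> exists2 j, (j < size f)%N & qcoef Q f j != 0.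
Proof.
move=> f0; have [/hasP [j] | /hasPn qcoef0f] :=
  boolP (has (fun j => qcoef Q f j != 0) (iota 0 (size f))).
  by rewrite mem_iota; exists j.
case/eqP: f0; rewrite (qexpansion f) big1 // => j _.
by have := qcoef0f j; rewrite mem_iota ltn_ord negbK => /(_ isT) /eqP ->; rewrite mul0r.
Qed.

End QExpansion.

Lemma ex_max_pos (le : rel nat) N :
  (forall s s', (0 < s)%N -> (0 < s')%N -> le s s' || le s' s) ->
  (forall s s' s'', (0 < s)%N -> (0 < s')%N -> (0 < s'')%N ->
     le s s' -> le s' s'' -> le s s'') ->
  (0 < N)%N -> exists2 t, (0 < t <= N)%N & forall s, (0 < s <= N)%N -> le s t.
Proof.
move=> le_total le_transitive; elim: N => // -[_ _ | N IH _].
  exists 1%N => // s; rewrite -eqn_leq => /eqP <-; by case/orP: (le_total 1 1 isT isT).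
have [t /andP [t0 tN] le_t] := IH isT.
have [le_tN | /negbTE nle_tN] := boolP (le t N.+2).
  exists N.+2; first by rewrite leqnn.
  move=> s /andP [s0]; rewrite leq_eqVlt ltnS => /orP [/eqP -> | sN].
    by case/orP: (le_total N.+2 N.+2 isT isT).
  by apply: le_transitive le_tN => //; apply: le_t; rewrite s0.
exists t; first by rewrite t0 ltnW.
move=> s /andP [s0]; rewrite leq_eqVlt ltnS => /orP [/eqP -> | sN].
  by have := le_total t N.+2 t0 isT; rewrite nle_tN.
by rewrite le_t ?s0.
Qed.

Section Slopes.
Variables (L : porderZmodType) (hL : ordered_group L).

(* [slope_lt t E w x s] encodes [(x - w) / s < E / t] for a term of a level
   with [w = nu (hasse s f)] and [x = nu f]; [w = oo] counts as slope -oo. *)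
Definition slope_lt (t : nat) (E : L) (w : vinf L) (x : L) (s : nat) : bool :=
  if w is Some z then (x - z) *+ t < E *+ s else true.

Definition slope_le (t : nat) (E : L) (w : vinf L) (x : L) (s : nat) : bool :=
  if w is Some z then (x - z) *+ t <= E *+ s else true.

Lemma slope_lt_rescale t t' E E' w x s : (0 < t)%N -> (0 < t')%N ->
  E *+ t' <= E' *+ t -> slope_lt t E w x s -> slope_lt t' E' w x s.
Proof.
case: w => [z|] //= t0 t'0 EE' lt_t; rewrite -(og_ltr_pMn2r hL _ _ t0) -mulrnA mulnC mulrnA.
apply: (lt_le_trans (og_ltrMn2r hL t'0 lt_t)).
by rewrite -!mulrnA mulnC [(s * t)%N]mulnC !mulrnA; apply: (og_lerMn2r hL).
Qed.

Lemma slope_le_rescale t t' E E' w x s : (0 < t)%N ->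
  E *+ t' <= E' *+ t -> slope_le t E w x s -> slope_le t' E' w x s.
Proof.
case: w => [z|] //= t0 EE' le_t; rewrite -(og_ler_pMn2r hL _ _ t0) -mulrnA mulnC mulrnA.
apply: (le_trans (og_lerMn2r hL t' le_t)).
by rewrite -!mulrnA mulnC [(s * t)%N]mulnC !mulrnA; apply: (og_lerMn2r hL).
Qed.

Variables (t : nat) (E : L).

Lemma slope_ltW w x s : slope_lt t E w x s -> slope_le t E w x s.
Proof. by case: w => //= z /ltW. Qed.

Lemma slope_le0 x : slope_le t E (Some x) x 0.
Proof. by rewrite /= subrr mul0rn mulr0n. Qed.

Lemma slope_lt_vle w w' x s : vle w w' -> slope_lt t E w x s -> slope_lt t E w' x s.
Proof.
case: w => [z|]; case: w' => [z'|] //= zz'; apply: le_lt_trans.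
by apply: (og_lerMn2r hL); rewrite (og_lerD2l hL) (og_lerN2 hL).
Qed.

Lemma slope_lt_ler w x x' s : x' <= x -> slope_lt t E w x s -> slope_lt t E w x' s.
Proof.
case: w => [z|] //= xx'; apply: le_lt_trans.
by apply: (og_lerMn2r hL); rewrite (og_lerD2r hL).
Qed.

Lemma slope_le_lt_vadd w1 w2 x1 x2 s1 s2 :
  slope_le t E w1 x1 s1 -> slope_lt t E w2 x2 s2 ->
  slope_lt t E (vadd w1 w2) (x1 + x2) (s1 + s2).
Proof.
case: w1 => [z1|]; case: w2 => [z2|] //= h1 h2.
by rewrite opprD addrACA mulrnDl mulrnDr (og_ler_ltD hL).
Qed.

Lemma slope_lt_le_vadd w1 w2 x1 x2 s1 s2 :
  slope_lt t E w1 x1 s1 -> slope_le t E w2 x2 s2 ->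
  slope_lt t E (vadd w1 w2) (x1 + x2) (s1 + s2).
Proof.
case: w1 => [z1|]; case: w2 => [z2|] //= h1 h2.
by rewrite opprD addrACA mulrnDl mulrnDr (og_ltr_leD hL).
Qed.

Lemma slope_lt_level w x : slope_lt t E w x t -> vlt (Some (x - E)) w.
Proof.
case: w => [z|] //; case: (posnP t) => [-> | t0]; first by rewrite /= !mulr0n ltxx.
rewrite /= (og_ltr_pMn2r hL) // -(og_ltrD2r hL _ _ (z - E)) addrA subrK.
by rewrite [E + _]addrC subrK.
Qed.

End Slopes.

Section LevelOfProducts.
Variables (K : fieldType) (L : porderZmodType) (hL : ordered_group L).
Variables (nu : {poly K} -> vinf L) (hnu : is_poly_valuation nu).
Variables (t : nat) (E : L).

(* [level_below g x], for [x = nu g], says that the level of [g] is below [E / t]. *)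
Definition level_below (g : {poly K}) (x : L) : Prop :=
  forall s, (0 < s)%N -> slope_lt t E (nu g^`N(s)) x s.

Lemma slope_lt_nuD x s f g :
  slope_lt t E (nu f) x s -> slope_lt t E (nu g) x s -> slope_lt t E (nu (f + g)) x s.
Proof.
move=> hf hg; apply: (slope_lt_vle hL (nuD hnu f g)).
by rewrite /vmin; case: ifP.
Qed.

Lemma slope_lt_nuB x s f g :
  slope_lt t E (nu f) x s -> slope_lt t E (nu g) x s -> slope_lt t E (nu (f - g)) x s.
Proof. by move=> hf hg; apply: slope_lt_nuD; rewrite ?(nuN hL hnu). Qed.

Lemma slope_lt_nu_sum x s I (r : seq I) (P : pred I) (F : I -> {poly K}) :
  (forall i, P i -> slope_lt t E (nu (F i)) x s) ->
  slope_lt t E (nu (\sum_(i <- r | P i) F i)) x s.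
Proof.
move=> h; elim/big_rec: _ => [|i f Pi hf]; last by apply: slope_lt_nuD; rewrite ?h.
by rewrite (nu0 hnu).
Qed.

Lemma level_below_slope_le g x :
  nu g = Some x -> level_below g x -> forall s, slope_le t E (nu g^`N(s)) x s.
Proof.
move=> hg hlev [|s]; first by rewrite nderivn0 hg slope_le0.
exact/slope_ltW/hlev.
Qed.

Lemma level_below_mul a c x1 x2 : nu a = Some x1 -> nu c = Some x2 ->
  level_below a x1 -> level_below c x2 -> level_below (a * c) (x1 + x2).
Proof.
move=> ha hc la lc s s0; rewrite nderivnM; apply: slope_lt_nu_sum => i _.
have le_is : (i <= s)%N by rewrite -ltnS.
rewrite (nuM hnu) -[X in slope_lt _ _ _ _ X](subnKC le_is).
have [-> | i0] := posnP i.
  apply: (slope_le_lt_vadd hL); first exact: level_below_slope_le ha la _.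
  by apply: lc; rewrite subn0.
by apply: (slope_lt_le_vadd hL); [exact: la | exact: level_below_slope_le hc lc _].
Qed.

End LevelOfProducts.

Section KeyPolynomial.
Variables (K : fieldType) (L : porderZmodType) (hL : ordered_group L).
Variables (nu : {poly K} -> vinf L) (hnu : is_poly_valuation nu).
Variable Q : {poly K}.
Hypotheses (Q_key : key_poly nu Q) (Q_nonconst : (1 < size Q)%N).
Implicit Types a c g q : {poly K}.

Lemma key_nu_fin : exists y, nu Q = Some y.
Proof.
case: Q_key => _ /(_ 0); rewrite size_poly0 => /(_ (ltnW Q_nonconst)).
by case=> [[_ [_ //]] | [] ]; rewrite /constant_poly size_poly0.
Qed.

Lemma key_nu_small_fin g : g != 0 -> (size g < size Q)%N -> exists x, nu g = Some x.
Proof.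
move=> g0 sg; have [/(nu_const_fin hnu g0) // | g_nonconst] := leqP (size g) 1.
case: Q_key => _ /(_ g sg) [[] | [_ [_ [x [_ [hx _]]]]]]; last by exists x.
by rewrite /constant_poly leqNgt g_nonconst.
Qed.

Section Level.
Variable y : L.
Hypothesis nuQ_y : nu Q = Some y.

(* The preorder comparing the terms [(y - nu (hasse s Q)) / s] of the level of [Q]. *)
Let term_le s s' :=
  if nu Q^`N(s') is Some b then slope_le s' (y - b) (nu Q^`N(s)) y s
  else nu Q^`N(s) == None.

Let term_le_total s s' : (0 < s)%N -> (0 < s')%N -> term_le s s' || term_le s' s.
Proof.
rewrite /term_le; case: (nu Q^`N(s)) => [z|]; case: (nu Q^`N(s')) => [z'|] //= _ _.
exact: og_total.
Qed.

Let term_le_trans s s' s'' : (0 < s)%N -> (0 < s')%N -> (0 < s'')%N ->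
  term_le s s' -> term_le s' s'' -> term_le s s''.
Proof.
rewrite /term_le => _ s'0 _; case: (nu Q^`N(s'')) => [b''|];
  case E' : (nu Q^`N(s')) => [b'|] //= le_ss' le_s's''.
- exact: slope_le_rescale le_s's'' le_ss'.
- by move/eqP: le_ss' ->.
Qed.

(* The level of [Q] is [(y - b) / t]. *)
Lemma key_level : exists t b, [/\ (0 < t)%N, nu Q^`N(t) = Some b &
  forall s, slope_le t (y - b) (nu Q^`N(s)) y s].
Proof.
have [t /andP [t0 tQ] max_t] :=
  ex_max_pos term_le_total term_le_trans (ltnW Q_nonconst).
pose m := (size Q).-1.
have [bm nuQm] : exists bm, nu Q^`N(m) = Some bm.
  apply: (nu_const_fin hnu); last by rewrite /nderivn (leq_trans (size_poly _ _)) // /m; lia.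
  apply/eqP => /(congr1 (coefp 0)); rewrite /= coef_nderivn addn0 binn mulr1n coef0.
  by rewrite -lead_coefE (monicP Q_key.1); apply/eqP; rewrite oner_eq0.
have [b nuQt] : exists b, nu Q^`N(t) = Some b.
  have := max_t m; rewrite /term_le /m; case: (nu Q^`N(t)) => [b|]; first by exists b.
  have m_range : (0 < m <= size Q)%N by rewrite /m; lia.
  by rewrite -/m nuQm => /(_ m_range).
exists t, b; split=> // s.
have [-> | s0] := posnP s; first by rewrite nderivn0 nuQ_y slope_le0.
have [sQ | Qs] := leqP s (size Q); last by rewrite nderivn_poly0 ?(nu0 hnu) // ltnW.
by have := max_t s; rewrite s0 sQ /term_le nuQt => ->.
Qed.

Section Product.
Variables (t : nat) (b : L).
Hypotheses (t_gt0 : (0 < t)%N) (nuQt : nu Q^`N(t) = Some b).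
Hypothesis Q_slopes : forall s, slope_le t (y - b) (nu Q^`N(s)) y s.
Local Notation E := (y - b).

Lemma key_small_level_below g : g != 0 -> (size g < size Q)%N ->
  exists2 x, nu g = Some x & level_below nu t E g x.
Proof.
move=> g0 sg; have [x nug] := key_nu_small_fin g0 sg; exists x => // s s0.
have [g_const | g_nonconst] := leqP (size g) 1.
  by rewrite nderivn_poly0 ?(nu0 hnu) // (leq_trans g_const).
case: Q_key => _ /(_ g sg) [[] | [_ [_ [x' [y' [nug' [nuQ' lev]]]]]]].
  by rewrite /constant_poly leqNgt g_nonconst.
move: nug' nuQ' lev; rewrite nug nuQ_y => -[<-] [<-] [t' [t'0 [b' [nuQt' slopes_g]]]].
case nugs : (nu g^`N(s)) => [a|] //.
apply: (@slope_lt_rescale _ hL t' t (y - b')) => //.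
  by move: (Q_slopes t'); rewrite nuQt'.
exact: slopes_g s0 a nugs.
Qed.

Lemma nu_nderivn_mulQ q w : nu q = Some w -> level_below nu t E q w ->
  nu ((q * Q)^`N(t)) = Some (w + b).
Proof.
move=> nuq lev_q; rewrite nderivnM big_ord_recl nderivn0 subn0.
have nu_lead : nu (q * Q^`N(t)) = Some (w + b) by rewrite (nuM hnu) nuq nuQt.
rewrite (nuD_eq hL hnu) // nu_lead.
have -> : w + b = w + y - E by rewrite opprB addrA addrAC addrK.
apply: (@slope_lt_level _ hL t); apply: (slope_lt_nu_sum hL hnu) => i _.
rewrite (nuM hnu) -[X in slope_lt _ _ _ _ X](@subnKC (lift ord0 i) t (ltn_ord i)).
by apply: (slope_lt_le_vadd hL); [apply: lev_q | apply: Q_slopes].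
Qed.

Lemma key_mul_divp a c : a != 0 -> c != 0 ->
  (size a < size Q)%N -> (size c < size Q)%N ->
  vlt (nu (a * c)) (nu ((a * c) %/ Q * Q)).
Proof.
move=> a0 c0 sa sc.
have [x1 nua lev_a] := key_small_level_below a0 sa.
have [x2 nuc lev_c] := key_small_level_below c0 sc.
set q := (a * c) %/ Q; set r := (a * c) %% Q.
have Q0 : Q != 0 by rewrite -size_poly_gt0 ltnW.
have sq : (size q < size Q)%N.
  rewrite /q size_divp //; have := size_polyMleq a c; move: sa sc.
  by move: (size (a * c)%R) (size a) (size c) (size Q) => n1 n2 n3 n4; lia.
have er : r = a * c - q * Q by rewrite /r /q {2}(divp_eq (a * c) Q) addrC addKr.
have [-> | q0] := eqVneq q 0; first by rewrite mul0r (nu0 hnu) (nuM hnu) nua nuc.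
have [w nuq lev_q] := key_small_level_below q0 sq.
have nuqQ : nu (q * Q) = Some (w + y) by rewrite (nuM hnu) nuq nuQ_y.
(* Otherwise the t-th derivative of [q Q = a c - r] would have slope below the
   level of [Q], while its summand [q * Q^`N(t)] realizes that level exactly. *)
rewrite (nuM hnu) nua nuc nuqQ /= (og_ltNge hL); apply/negP => le_wy.
have slope_ac : slope_lt t E (nu (a * c)^`N(t)) (w + y) t.
  exact: (slope_lt_ler hL le_wy) (level_below_mul hL hnu nua nuc lev_a lev_c t_gt0).
have slope_r : slope_lt t E (nu r^`N(t)) (w + y) t.
  have [-> | r0] := eqVneq r 0; first by rewrite nderivn_poly0 ?(nu0 hnu) // size_poly0.
  have [xr nur lev_r] : exists2 xr, nu r = Some xr & level_below nu t E r xr.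
    by apply: key_small_level_below; rewrite // ltn_modp.
  have : vle (Some (w + y)) (nu r).
    by rewrite er; apply: (vle_nuB hL hnu); rewrite ?nuqQ /= ?lexx // (nuM hnu) nua nuc.
  by rewrite nur => /= le_r; apply: (slope_lt_ler hL le_r (lev_r t t_gt0)).
have : slope_lt t E (nu (q * Q)^`N(t)) (w + y) t.
  by rewrite -[q * Q](subKr (a * c)) -er nderivnB; apply: (slope_lt_nuB hL hnu).
rewrite (nu_nderivn_mulQ nuq lev_q) => /(slope_lt_level hL) /=.
by rewrite opprB addrA addrAC addrK ltxx.
Qed.

End Product.
End Level.

Lemma key_mul_small a c : a != 0 -> c != 0 ->
    (size a < size Q)%N -> (size c < size Q)%N ->
  nu ((a * c) %% Q) = nu (a * c) /\ vlt (nu (a * c)) (nu ((a * c) %/ Q * Q)).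
Proof.
move=> a0 c0 sa sc; have [y nuQ_y] := key_nu_fin.
have [t [b [t0 nuQt Q_slopes]]] := key_level nuQ_y.
have lt_ac := key_mul_divp nuQ_y t0 nuQt Q_slopes a0 c0 sa sc; split=> //.
have -> : (a * c) %% Q = a * c + - ((a * c) %/ Q * Q).
  by rewrite {2}(divp_eq (a * c) Q) addrC addKr.
by rewrite (nuD_eq hL hnu) // (nuN hL hnu).
Qed.

End KeyPolynomial.

Section LeadingTerm.
Variables (K : fieldType) (L : porderZmodType) (hL : ordered_group L).
Variables (nu : {poly K} -> vinf L) (hnu : is_poly_valuation nu).
Variable Q : {poly K}.
Implicit Types p c g : {poly K}.

(* [qlead p c k lam]: every term of the [Q]-expansion of [p] has value at
   least [lam], and up to terms of value [> lam] the expansion ends with [c Q^k]. *)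
Definition qlead (p c : {poly K}) (k : nat) (lam : L) : Prop :=
  [/\ forall i, vle (Some lam) (nu (qcoef Q p i * Q ^+ i)),
      forall i, (k < i)%N -> vlt (Some lam) (nu (qcoef Q p i * Q ^+ i))
    & vlt (Some lam) (nu ((qcoef Q p k - c) * Q ^+ k))].

Hypothesis Q_nonconst : (1 < size Q)%N.
Let Q_neq0 : Q != 0. Proof. by rewrite -size_poly_gt0 ltnW. Qed.

Lemma nuQ_le_term p i : vle (nuQ nu Q p) (nu (qcoef Q p i * Q ^+ i)).
Proof.
have [ip | pi] := ltnP i (size p).
  exact: (bigmin_le hL (fun j : 'I_(size p) => nu (qcoef Q p j * Q ^+ j))
                     (mem_index_enum (Ordinal ip))).
by rewrite (qcoef_eq0 Q_neq0 Q_nonconst pi) mul0r (nu0 hnu); case: (nuQ nu Q p).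
Qed.

Lemma qlead_term p c k lam : qlead p c k lam -> nu (c * Q ^+ k) = Some lam ->
  nu (qcoef Q p k * Q ^+ k) = Some lam.
Proof.
case=> _ _ lead_c nu_c; rewrite -[qcoef Q p k](subrK c) mulrDl addrC (nuD_eq hL hnu) //.
by rewrite nu_c.
Qed.

Lemma qlead_nuQ p c k lam : qlead p c k lam -> nu (c * Q ^+ k) = Some lam ->
  nuQ nu Q p = Some lam.
Proof.
move=> lead nu_c; apply: vle_anti; first by rewrite -(qlead_term lead nu_c) nuQ_le_term.
by apply: vle_bigmin => i; case: lead.
Qed.

Lemma qlead_degQ p c k lam : qlead p c k lam -> nu (c * Q ^+ k) = Some lam ->
  degQ nu Q p = k.
Proof.
move=> lead nu_c; have nu_k := qlead_term lead nu_c; rewrite /degQ (qlead_nuQ lead nu_c).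
apply/eqP; rewrite eqn_leq; apply/andP; split.
  apply/bigmax_leqP => i /eqP nu_i; rewrite leqNgt; apply/negP => ki.
  by case: lead => _ /(_ _ ki); rewrite nu_i vlt_irr.
have kp : (k < size p)%N.
  rewrite ltnNge; apply/negP => /(qcoef_eq0 Q_neq0 Q_nonconst) pk.
  by move: nu_k; rewrite pk mul0r (nu0 hnu).
by apply: (leq_bigmax_cond (Ordinal kp)); rewrite /= nu_k.
Qed.

Lemma qlead_sum n (P : pred nat) (p c : nat -> {poly K}) (lam : nat -> L) J :
  (J < n)%N -> P J -> (forall j, (j < n)%N -> P j -> qlead (p j) (c j) j (lam j)) ->
  (forall j, (j < n)%N -> P j -> lam J <= lam j /\ ((J < j)%N -> lam J < lam j)) ->
  qlead (\sum_(j < n | P j) p j) (c J) J (lam J).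
Proof.
move=> Jn PJ lead_p min_J.
have above j i : (j < n)%N -> P j -> (j < i)%N || (J < j)%N ->
    vlt (Some (lam J)) (nu (qcoef Q (p j) i * Q ^+ i)).
  move=> jn Pj; have [le_J lt_J] := min_J j jn Pj; have [le_j lt_j _] := lead_p j jn Pj.
  case/orP=> [/lt_j | /lt_J lt_Jj]; first exact: vle_lt_trans.
  exact: (vlt_le_trans _ (le_j i)).
have qterm_sum i : qcoef Q (\sum_(j < n | P j) p j) i * Q ^+ i =
    \sum_(j < n | P j) qcoef Q (p j) i * Q ^+ i by rewrite qcoef_sum mulr_suml.
split=> [i | i Ji |]; rewrite ?qterm_sum.
- apply: (vle_nu_sum hnu) => j Pj; have [le_j _ _] := lead_p j (ltn_ord j) Pj.
  by apply: (vle_trans _ (le_j i)); apply: (min_J j (ltn_ord j) Pj).1.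
- apply: (vlt_nu_sum hnu) => j Pj; apply: above => //.
  by case: (leqP j J) => [jJ | _]; rewrite ?orbT ?(leq_ltn_trans jJ Ji).
rewrite qcoef_sum (bigD1 (Ordinal Jn) PJ) addrAC mulrDl mulr_suml.
apply: (vlt_nuD hnu); first by case: (lead_p J Jn PJ).
apply: (vlt_nu_sum hnu) => j /andP [Pj jJ]; apply: above => //.
by rewrite -neq_ltn; apply: contra jJ => /eqP jJ; apply/eqP/val_inj.
Qed.

Hypothesis Q_key : key_poly nu Q.
Variables (y : L) (h : {poly K}).
Hypotheses (nuQ_y : nu Q = Some y) (nu_h : nu h = Some y) (h_small : (size h < size Q)%N).

Let rem p i := (h * qcoef Q p i) %% Q.
Let quo p i := (h * qcoef Q p i) %/ Q.

Lemma qcoef_mul_addQ p i : qcoef Q (p * (Q + h)) i =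
  rem p i + (if i is j.+1 then qcoef Q p j + quo p j else 0).
Proof.
have size_quo j : (size (quo p j) < size Q)%N.
  rewrite size_divp //; have := size_polyMleq h (qcoef Q p j).
  have := size_qcoef Q_neq0 p j; move: h_small Q_nonconst.
  by move: (size Q) (size h) (size (qcoef Q p j)) (size (h * qcoef Q p j)%R) => ????; lia.
have rem_eq0 j : (size p <= j)%N -> rem p j = 0.
  by move=> pj; rewrite /rem (qcoef_eq0 Q_neq0 Q_nonconst) ?mulr0 ?mod0p.
have quo_eq0 j : (size p <= j)%N -> quo p j = 0.
  by move=> pj; rewrite /quo (qcoef_eq0 Q_neq0 Q_nonconst) ?mulr0 ?div0p.
rewrite mulrDr qcoefD (qcoef_mulQ Q_neq0) {2}(qexpansion Q_neq0 Q_nonconst p).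
rewrite mulr_suml qcoef_sum.
have -> : \sum_(j < size p) qcoef Q (qcoef Q p j * Q ^+ j * h) i =
    \sum_(j < size p | (j : nat) == i) rem p j + \sum_(j < size p | j.+1 == i) quo p j.
  rewrite !(big_mkcond (fun j : 'I_(size p) => _ == i)) -big_split /=.
  apply: eq_bigr => j _.
  rewrite mulrAC (mulrC _ h) (divp_eq (h * qcoef Q p j) Q) mulrDl.
  rewrite -/(rem p j) -/(quo p j) -mulrA -exprS qcoefD.
  by rewrite !(qcoef_monomial Q_neq0) ?size_quo ?ltn_modp // ![i == _]eq_sym addrC.
have -> : \sum_(j < size p | (j : nat) == i) rem p j = rem p i.
  by rewrite (big_ord1_eq _ (rem p)); case: ltnP => // /rem_eq0 ->.
case: i => [|i]; first by rewrite big_pred0 // add0r addr0.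
under eq_bigl => j do rewrite eqSS.
rewrite (big_ord1_eq _ (quo p)); case: ltnP => [_ | /quo_eq0 ->].
  by rewrite addrCA addrA.
by rewrite !addr0 addrC.
Qed.

Let h_neq0 : h != 0.
Proof. by apply: contra_eq_neq nu_h => ->; rewrite (nu0 hnu). Qed.

Lemma nu_mulQS a i : nu (a * Q ^+ i.+1) = vadd (nu (a * Q ^+ i)) (Some y).
Proof. by rewrite exprSr mulrA (nuM hnu) nuQ_y. Qed.

Lemma nu_rem_term p i : nu (rem p i * Q ^+ i) = vadd (nu (qcoef Q p i * Q ^+ i)) (Some y).
Proof.
rewrite /rem; have [-> | p0] := eqVneq (qcoef Q p i) 0.
  by rewrite mulr0 mod0p !mul0r (nu0 hnu).
have [z nup] := key_nu_small_fin hnu Q_key p0 (size_qcoef Q_neq0 p i).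
have [nu_rem _] :=
  key_mul_small hL hnu Q_key Q_nonconst h_neq0 p0 h_small (size_qcoef Q_neq0 p i).
rewrite !(nuM hnu) nu_rem (nuM hnu) nu_h nup (nuX hnu _ nuQ_y) /=.
by rewrite -addrA addrC.
Qed.

Lemma nu_quo_term p i mu : vle (Some mu) (nu (qcoef Q p i * Q ^+ i)) ->
  vlt (Some (mu + y)) (nu (quo p i * Q ^+ i.+1)).
Proof.
rewrite /quo; have [-> | p0] := eqVneq (qcoef Q p i) 0.
  by rewrite mulr0 div0p !mul0r (nu0 hnu).
have [z nup] := key_nu_small_fin hnu Q_key p0 (size_qcoef Q_neq0 p i).
have [_] := key_mul_small hL hnu Q_key Q_nonconst h_neq0 p0 h_small (size_qcoef Q_neq0 p i).
rewrite nu_mulQS !(nuM hnu) nu_h nup (nuX hnu _ nuQ_y) nuQ_y.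
case: (nu (quo p i)) => [v|] //= lt_zv le_mu.
rewrite addrC (og_ltrD2r hL) in lt_zv.
by rewrite (og_ltrD2r hL); apply: le_lt_trans le_mu _; rewrite (og_ltrD2r hL).
Qed.

Lemma qlead_mul_addQ p c k lam : qlead p c k lam -> qlead (p * (Q + h)) c k.+1 (lam + y).
Proof.
case=> le_lam lt_lam lead_c.
have shift_le a : vle (Some lam) a -> vle (Some (lam + y)) (vadd a (Some y)).
  by rewrite -[Some (lam + y)]/(vadd (Some lam) (Some y)) (vle_addr hL).
have shift_lt a : vlt (Some lam) a -> vlt (Some (lam + y)) (vadd a (Some y)).
  by rewrite -[Some (lam + y)]/(vadd (Some lam) (Some y)) (vlt_addr hL).
split.
- move=> [|i]; rewrite qcoef_mul_addQ; first by rewrite addr0 nu_rem_term shift_le.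
  rewrite !mulrDl; apply: (vle_nuD hnu); first by rewrite nu_rem_term shift_le.
  apply: (vle_nuD hnu); first by rewrite nu_mulQS shift_le.
  exact/(vlt_vle)/nu_quo_term.
- move=> [|i] // ki; rewrite qcoef_mul_addQ !mulrDl.
  apply: (vlt_nuD hnu); first by rewrite nu_rem_term shift_lt // lt_lam // ltnW.
  apply: (vlt_nuD hnu); last exact: nu_quo_term.
  by rewrite nu_mulQS shift_lt // lt_lam.
- have -> : qcoef Q (p * (Q + h)) k.+1 - c = rem p k.+1 + ((qcoef Q p k - c) + quo p k).
    by rewrite qcoef_mul_addQ; ring.
  rewrite mulrDl [(_ + quo p k) * _]mulrDl.
  apply: (vlt_nuD hnu); first by rewrite nu_rem_term shift_lt // lt_lam.
  apply: (vlt_nuD hnu); last exact: nu_quo_term.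
  by rewrite nu_mulQS shift_lt.
Qed.

Lemma qlead_mulX g x j : (size g < size Q)%N -> nu g = Some x ->
  qlead (g * (Q + h) ^+ j) g j (x + y *+ j).
Proof.
move=> g_small nug; elim: j => [|j IH].
  have qcoef_g i : qcoef Q g i = if i == 0%N then g else 0.
    by rewrite -[g]mulr1 -(expr0 Q) (qcoef_monomial Q_neq0) ?mulr1.
  rewrite expr0 mulr1 mulr0n addr0; split=> [[|i] | [|i] // | ]; rewrite !qcoef_g //=.
  - by rewrite expr0 mulr1 nug /= lexx.
  - by rewrite !mul0r (nu0 hnu).
  - by rewrite !mul0r (nu0 hnu).
  - by rewrite subrr mul0r (nu0 hnu).
by rewrite exprSr mulrA mulrSr addrA; apply: qlead_mul_addQ.
Qed.

End LeadingTerm.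

Section ChangeOfKey.
Variables (K : fieldType) (L : porderZmodType) (hL : ordered_group L).
Variables (nu : {poly K} -> vinf L) (hnu : is_poly_valuation nu).
Variables (Q R : {poly K}) (y rho : L).
Hypotheses (Q_key : key_poly nu Q) (R_key : key_poly nu R).
Hypotheses (Q_nonconst : (1 < size Q)%N) (size_RQ : size R = size Q).
Hypotheses (nuQ_y : nu Q = Some y) (nuR_rho : nu R = Some rho) (y_lt_rho : y < rho).

Let R_nonconst : (1 < size R)%N. Proof. by rewrite size_RQ. Qed.
Let R_neq0 : R != 0. Proof. by rewrite -size_poly_gt0 ltnW. Qed.

Lemma size_key_sub : (size (R - Q)%R < size Q)%N.
Proof.
have le_RQ : (size (R - Q)%R <= size Q)%N.
  by rewrite (leq_trans (size_polyD _ _)) // size_polyN size_RQ maxnn.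
rewrite ltn_neqAle le_RQ andbT; apply/eqP => e.
have : lead_coef (R - Q) == 0.
  rewrite lead_coefE e coefB -{1}size_RQ -!lead_coefE.
  by rewrite (monicP Q_key.1) (monicP R_key.1) subrr.
rewrite lead_coef_eq0 => /eqP e0; move: Q_nonconst; by rewrite -e e0 size_poly0.
Qed.

Lemma nu_key_sub : nu (R - Q) = Some y.
Proof. by rewrite addrC (nuD_eq hL hnu) (nuN hL hnu) nuQ_y // nuR_rho. Qed.

Variable f : {poly K}.
Local Notation g j := (qcoef R f j).
(* [lam j] is [nu (g j * Q ^+ j)] whenever [g j != 0], the only case used. *)
Let lam j := odflt 0 (nu (g j * Q ^+ j)).

Lemma qlead_qcoef_mulX j : g j != 0 ->
  nu (g j * Q ^+ j) = Some (lam j) /\ qlead nu Q (g j * R ^+ j) (g j) j (lam j).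
Proof.
move=> gj0; have g_small : (size (g j) < size Q)%N by rewrite -size_RQ size_qcoef.
have [x nu_g] := key_nu_small_fin hnu Q_key gj0 g_small.
have nu_gQ : nu (g j * Q ^+ j) = Some (x + y *+ j).
  by rewrite (nuM hnu) nu_g (nuX hnu _ nuQ_y).
rewrite /lam nu_gQ; split=> //.
have := qlead_mulX hL hnu Q_nonconst Q_key nuQ_y nu_key_sub size_key_sub j g_small nu_g.
by rewrite addrC subrK.
Qed.

Lemma nuQ_qcoef_mulX j : g j != 0 -> nuQ nu Q (g j * R ^+ j) = Some (lam j).
Proof. by case/qlead_qcoef_mulX => nu_gQ /(qlead_nuQ hL hnu Q_nonconst); apply. Qed.

Section LastIndex.
Variable J : nat.
Hypotheses (J_lt : (J < size f)%N) (gJ_neq0 : g J != 0).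
Hypothesis J_last_argmin : forall j, (j < size f)%N -> g j != 0 ->
  lam J <= lam j /\ ((J < j)%N -> lam J < lam j).

Lemma qlead_f : qlead nu Q f (g J) J (lam J).
Proof.
have ef : f = \sum_(j < size f | g j != 0) g j * R ^+ j.
  rewrite {1}(qexpansion R_neq0 R_nonconst f) [RHS]big_mkcond /=.
  by apply: eq_bigr => j _; case: eqP => // ->; rewrite mul0r.
rewrite {1}ef.
apply: (@qlead_sum _ _ _ hnu _ _ (fun j => g j != 0) (fun j => g j * R ^+ j) (fun j => g j)) => //.
by move=> j _ /qlead_qcoef_mulX [].
Qed.

Let nu_gJ : nu (g J * Q ^+ J) = Some (lam J).
Proof. by case: (qlead_qcoef_mulX gJ_neq0). Qed.

Lemma degQ_f : degQ nu Q f = J.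
Proof. exact: (qlead_degQ hL hnu Q_nonconst) qlead_f nu_gJ. Qed.

Lemma nuQ_f : nuQ nu Q f = Some (lam J).
Proof. exact: (qlead_nuQ hL hnu Q_nonconst) qlead_f nu_gJ. Qed.

Let nu_mulQJ a : nu (a * Q ^+ J) = vadd (nu a) (Some (y *+ J)).
Proof. by rewrite (nuM hnu) (nuX hnu _ nuQ_y). Qed.

Lemma nu_qcoefQ_sub_qcoefR : vlt (nu (qcoef Q f J)) (nu (qcoef Q f J - g J)).
Proof.
have [_ _] := qlead_f; rewrite -(qlead_term hL hnu qlead_f nu_gJ).
by rewrite !nu_mulQJ (vlt_addr hL).
Qed.

Lemma nu_qcoefQ_qcoefR : nu (qcoef Q f J) = nu (g J).
Proof.
apply: (@vadd_injr _ (y *+ J)); rewrite -!nu_mulQJ nu_gJ.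
exact: (qlead_term hL hnu) qlead_f nu_gJ.
Qed.

Lemma nuQ_qcoefR_mulX_last : nuQ nu Q (g J * R ^+ J) = nuQ nu Q f /\
  forall j, nuQ nu Q (g j * R ^+ j) = nuQ nu Q f -> (j <= J)%N.
Proof.
rewrite nuQ_f (nuQ_qcoef_mulX gJ_neq0); split=> // j.
have [-> | gj0] := eqVneq (g j) 0; first by rewrite mul0r /nuQ size_poly0 big_ord0.
have jf : (j < size f)%N.
  by rewrite ltnNge; apply: contra gj0 => /(qcoef_eq0 R_neq0 R_nonconst) ->.
rewrite (nuQ_qcoef_mulX gj0) => -[lam_j]; rewrite leqNgt; apply/negP.
by move=> /(J_last_argmin jf gj0).2; rewrite lam_j ltxx.
Qed.

Lemma degR_f_le : (degQ nu R f <= J)%N.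
Proof.
apply/bigmax_leqP => i /eqP nu_i; rewrite leqNgt; apply/negP => Ji.
have := nuQ_le_term hL hnu R_nonconst f J; rewrite -nu_i.
have g_small j : (size (g j) < size Q)%N by rewrite -size_RQ size_qcoef.
have [xJ nu_gJ'] := key_nu_small_fin hnu Q_key gJ_neq0 (g_small J).
have [-> | gi0] := eqVneq (g i) 0.
  by rewrite mul0r (nu0 hnu) (nuM hnu) (nuX hnu _ nuR_rho) nu_gJ'.
have [xi nu_gi] := key_nu_small_fin hnu Q_key gi0 (g_small i).
have lam_x j x : nu (g j) = Some x -> lam j = x + y *+ j.
  by rewrite /lam (nuM hnu) (nuX hnu _ nuQ_y) => ->.
have if_ : (i < size f)%N.
  by rewrite ltnNge; apply: contra gi0 => /(qcoef_eq0 R_neq0 R_nonconst) ->.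
have := (J_last_argmin if_ gi0).1; rewrite (lam_x _ _ nu_gi) (lam_x _ _ nu_gJ').
move=> /(og_addMn_lt hL y_lt_rho Ji) lt_R.
by rewrite !(nuM hnu) !(nuX hnu _ nuR_rho) nu_gi nu_gJ' /= (og_leNgt hL) lt_R.
Qed.

End LastIndex.

Lemma key_change_qexpansion : f != 0 ->
  let d := degQ nu Q f in
  [/\ vlt (nu (qcoef Q f d)) (nu (qcoef Q f d - qcoef R f d)),
      nu (qcoef Q f d) = nu (qcoef R f d),
      nuQ nu Q (qcoef R f d * R ^+ d) = nuQ nu Q f
        /\ (forall j : nat, nuQ nu Q (qcoef R f j * R ^+ j) = nuQ nu Q f ->
              (j <= d)%N)
    & (degQ nu R f <= d)%N].
Proof.
move=> f0.
have [J [J_lt gJ J_min]] := ex_last_argmin hL lam (qcoef_neq0 R_neq0 R_nonconst f0).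
rewrite /= (degQ_f J_lt gJ J_min); split.
- exact: nu_qcoefQ_sub_qcoefR.
- exact: nu_qcoefQ_qcoefR.
- exact: nuQ_qcoefR_mulX_last.
- exact: degR_f_le.
Qed.

End ChangeOfKey.

Theorem mainTheorem2
  (K : fieldType) (L : porderZmodType) (hL : divisible_oag L)
  (v : K -> vinf L) (hv : is_field_valuation v)
  (nu : {poly K} -> vinf L) (hnu : is_poly_valuation nu)
  (hext : extends nu v) (hws : well_specified nu v)
  (m : nat) (hm : (1 <= m)%N)
  (hPsi_ne : exists Q, Psi nu m Q)
  (hPsi_nomax : ~ exists Q, Psi nu m Q /\
                    forall R, Psi nu m R -> vle (nu R) (nu Q))
  (Qs : {poly K} -> Prop)
  (hQs_sub : forall Q, Qs Q -> Psi nu m Q)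
  (hQs_inj : forall Q R, Qs Q -> Qs R -> nu Q = nu R -> Q = R)
  (hQs_wf : forall S : {poly K} -> Prop, (forall Q, S Q -> Qs Q) ->
              (exists Q, S Q) ->
              exists Q, S Q /\ forall R, S R -> vle (nu Q) (nu R))
  (hQs_cof : forall P, Psi nu m P -> exists Q, Qs Q /\ vle (nu P) (nu Q))
  (f Q R : {poly K}) (hf : f != 0)
  (hQ : Qs Q) (hR : Qs R) (hQR : vlt (nu Q) (nu R)) :
  let d := degQ nu Q f in
  [/\ vlt (nu (qcoef Q f d)) (nu (qcoef Q f d - qcoef R f d)),
      nu (qcoef Q f d) = nu (qcoef R f d),
      nuQ nu Q (qcoef R f d * R ^+ d) = nuQ nu Q f
        /\ (forall j : nat, nuQ nu Q (qcoef R f j * R ^+ j) = nuQ nu Q f ->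
              (j <= d)%N)
    & (degQ nu R f <= d)%N].
Proof.
have og := divisible_oag_ordered hL.
have [[Q_key sQ] [R_key sR]] := (hQs_sub Q hQ, hQs_sub R hR).
have Q_nonconst : (1 < size Q)%N by rewrite sQ.
have size_RQ : size R = size Q by rewrite sQ sR.
have R_nonconst : (1 < size R)%N by rewrite sR.
have [y nuQ_y] := key_nu_fin Q_key Q_nonconst.
have [rho nuR_rho] := key_nu_fin R_key R_nonconst.
have y_lt_rho : y < rho by move: hQR; rewrite nuQ_y nuR_rho.
exact: (key_change_qexpansion og hnu Q_key R_key Q_nonconst size_RQ nuQ_y nuR_rho y_lt_rho).
Qed.
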